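(* Let $1\le n<L$ and all rates positive. For $i\in\{1,\dots,n\}$ write $f_i(p_1,\dots,p_n,q_1,\dots,q_n)=\langle\eta_{i,1}\rangle$, the stationary density of $\Box$'s at site $(i,1)$ as a function of the rates. Then for $1\le i\le n$, $$f_i(p_2,p_3,\dots,p_n,p_1,\;q_2,q_3,\dots,q_n,q_1)=f_{i+1}(p_1,\dots,p_n,q_1,\dots,q_n),$$ i.e. $\langle\eta_{i,1}\rangle$ with $p_j\to p_{j+1}$, $q_j\to q_{j+1}$ for all $j$ (indices mod $n$) equals $\langle\eta_{i+1,1}\rangle$, where $f_{n+1}=f_1$.
   Context: Particle labels/rows are taken modulo $n$, positions/columns modulo $L$. $\Omega_{L,n}$ is the set of words $w_1\cdots w_L$ on the ring $\mathbb{Z}/L\mathbb{Z}$ over the alphabet $\{\bullet_1,\dots,\bullet_n,\Box_1,\dots,\Box_n\}$ in which each $\bullet_k$ occurs exactly once, the $\bullet_1,\dots,\bullet_n$ appear in this cyclic order, and the remaining $L-n$ letters are arbitrary $\Box_i$'s. Transitions (displayed segments are consecutive positions, rest unchanged, $C$ a possibly empty word in the $\Box$-letters): (T1) $\bullet_k\Box_i \to \Box_i\bullet_k$ at rate $p_k$, if $i\neq k$; (T2) $\bullet_{k-1}\,C\,\bullet_k\Box_k \to \bullet_{k-1}\Box_{k-1}\,C\,\bullet_k$ at rate $p_k$; (T3) $\Box_i\bullet_k \to \bullet_k\Box_i$ at rate $q_k$, if $i\neq k$; (T4) $\Box_k\bullet_k\,C\,\bullet_{k+1} \to \bullet_k\,C\,\Box_{k+1}\bullet_{k+1}$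 at rate $q_k$. $\mathcal{A}_{L,n}$ is the set of arrays with $n$ rows and $L$ columns, entries in $\{\cdot,\bullet,\Box\}$, identified with $\Omega_{L,n}$ via: column $j$ has a $\bullet$ (resp. $\Box$) in row $k$ and $\cdot$ elsewhere iff $w_j=\bullet_k$ (resp. $\Box_k$); it carries the transported dynamics, irreducible when all rates are positive. $\eta_{i,j}$ is the indicator that site (row $i$, column $j$) is occupied by a $\Box$, and $\langle\cdot\rangle$ denotes expectation under the unique stationary distribution. *)

From HB Require Import structures.
From mathcomp Require Import all_boot all_order all_algebra.
From mathcomp Require Import reals.
Set Implicit Arguments. Unset Strict Implicit. Unset Printing Implicit Defensive.
Import Order.TTheory GRing.Theory Num.Theory.

(* Conventions: particle labels / rows 1..n are 'I_n (0-based, label k+1 <-> k),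
   positions / columns 1..L are 'I_L (column 1 <-> 0).
   A letter is a pair (b, k) : bool * 'I_n; (true, k) = bullet_k, (false, k) = Box_k. *)

Definition letter (n : nat) := (bool * 'I_n)%type.
Definition word (n L : nat) := {ffun 'I_L -> letter n}.

Definition cdist (L : nat) (a b : 'I_L) : nat := ((b + L - a) %% L)%N.

(* The set Omega_{L,n}: each bullet_k occurs exactly once, and going forward
   around the ring from any bullet, the next bullet met carries the next label. *)
Definition valid (n L : nat) (w : word n L) : bool :=
  [forall k : 'I_n, #|[set j | w j == (true, k)]| == 1%N] &&
  [forall j : 'I_L, forall j2 : 'I_L,
     [&& (w j).1, (w j2).1, j != j2 &
        [forall x : 'I_L, ((0 < cdist j x) && (cdist j x < cdist j j2))%N ==> ~~ (w x).1]]
     ==> ((w j2).2 == ordS (w j).2)].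

Definition Omega (n L : nat) : {set word n L} := [set w | valid w].

Definition swapw (n L : nat) (w : word n L) (a b : 'I_L) : word n L :=
  [ffun x => if x == a then w b else if x == b then w a else w x].

(* (T2) bullet_{k-1} C bullet_k Box_k -> bullet_{k-1} Box_{k-1} C bullet_k,
   bullet_k at position j.  m = position of bullet_{k-1}; dd x in 1..L is the
   forward distance from m to x (with dd m = L); the affected block is the set
   of x with 1 <= dd x <= dd j, i.e. positions m+1 .. j, plus position j+1. *)
Definition T2res (n L : nat) (w : word n L) (j : 'I_L) : word n L :=
  let k := (w j).2 in
  let m := odflt j [pick m : 'I_L | w m == (true, ord_pred k)] in
  let dd := fun x : 'I_L => ((x + L - m - 1) %% L).+1 in
  [ffun x => if x == ordS j then (true, k)
             else if (dd x <= dd j)%N then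
               (if dd x == 1%N then (false, ord_pred k) else w (ord_pred x))
             else w x].

(* (T4) Box_k bullet_k C bullet_{k+1} -> bullet_k C Box_{k+1} bullet_{k+1},
   bullet_k at position j.  M = position of bullet_{k+1}; dd x in 1..L is the
   backward distance from M to x (dd M = L); block = positions j .. M-1, plus j-1. *)
Definition T4res (n L : nat) (w : word n L) (j : 'I_L) : word n L :=
  let k := (w j).2 in
  let M := odflt j [pick m : 'I_L | w m == (true, ordS k)] in
  let dd := fun x : 'I_L => ((M + L - x - 1) %% L).+1 in
  [ffun x => if x == ord_pred j then (true, k)
             else if (dd x <= dd j)%N then
               (if dd x == 1%N then (false, ordS k) else w (ordS x))
             else w x].

(* forward jump of the bullet at j (rules T1 / T2, rate p_k) *)
Definition fwd (n L : nat) (w : word n L) (j : 'I_L) : option (word n L) :=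
  if (w j).1 then
    let k := (w j).2 in
    let c := w (ordS j) in
    if c.1 then None
    else Some (if c.2 == k then T2res w j else swapw w j (ordS j))
  else None.

(* backward jump of the bullet at j (rules T3 / T4, rate q_k) *)
Definition bwd (n L : nat) (w : word n L) (j : 'I_L) : option (word n L) :=
  if (w j).1 then
    let k := (w j).2 in
    let c := w (ord_pred j) in
    if c.1 then None
    else Some (if c.2 == k then T4res w j else swapw w j (ord_pred j))
  else None.

Local Open Scope ring_scope.

Definition rate (R : realType) (n L : nat) (p q : 'I_n -> R) (w w' : word n L) : R :=
  \sum_(j : 'I_L)
     ((if fwd w j is Some v then (v == w')%:R * p (w j).2 else 0) +
      (if bwd w j is Some v then (v == w')%:R * q (w j).2 else 0)).

Definition stationary (R : realType) (n L : nat) (p q : 'I_n -> R)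
    (pi : word n L -> R) : Prop :=
  [/\ forall w, w \notin Omega n L -> pi w = 0,
      forall w, 0 <= pi w,
      \sum_(w in Omega n L) pi w = 1 &
      forall w', w' \in Omega n L ->
        \sum_(w in Omega n L) pi w * rate p q w w' =
        pi w' * \sum_(w'' in Omega n L) rate p q w' w''].

(* <eta_{i,c}> : probability that site (row i, column c) holds a Box *)
Definition density (R : realType) (n L : nat) (pi : word n L -> R)
    (c : 'I_L) (i : 'I_n) : R :=
  \sum_(w in Omega n L) pi w * (w c == (false, i))%:R.

From HB Require Import structures.
From mathcomp Require Import all_boot all_order all_algebra.
From mathcomp Require Import perm reals zify.
Set Implicit Arguments. Unset Strict Implicit. Unset Printing Implicit Defensive.
Import Order.TTheory GRing.Theory Num.Theory.

(* The relabelling [k -> k+1] of all letters commutes with every transition and turns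
   the rates of bullet [k] into those of bullet [k+1], so it carries stationary laws for
   [p, q] to stationary laws for the shifted rates; the theorem follows because the
   stationary law is unique.  Uniqueness holds because every word reaches the same
   canonical word by backward jumps alone.  Jumping bullet [k] back over the box in front
   of it sends that box to the gap of bullet [k+1] (relabelled [Box_{k+1}] when it was
   [Box_k]), so repeated jumps empty the gap of [k].  Emptying the gaps of
   [1, ..., n-1] gathers all boxes in front of bullet [0]; then emptying the gaps of
   [0, ..., n-2] in turn pushes them, with labels never below their gap, in front of
   bullet [n-1] as copies of [Box_{n-1}].  Such a word is determined by the position of
   bullet [n-1], which one more jump followed by the same sweep moves one step back. *)

Lemma val_ordS L (x : 'I_L) : ordS x = (if x.+1 == L then 0 else x.+1) :> nat.
Proof.
rewrite /ordS /=; have := ltn_ord x; case: eqP => [->|h] hx; first by rewrite modnn.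
by rewrite modn_small //; lia.
Qed.

Lemma val_ord_pred L (x : 'I_L) : ord_pred x = (if x == 0 :> nat then L.-1 else x.-1) :> nat.
Proof.
rewrite /ord_pred /=; have := ltn_ord x; case: eqP => [->|h] hx.
  by rewrite add0n modn_small //; lia.
by rewrite -subn1 -addnBAC ?modnDr ?modn_small ?subn1; lia.
Qed.

Lemma cdistE L (a b : 'I_L) : cdist a b = if a <= b then b - a else b + L - a.
Proof.
rewrite /cdist; have := ltn_ord a; have := ltn_ord b; case: (leqP a b) => h hb ha.
  have -> : b + L - a = (b - a) + L by lia.
  by rewrite modnDr modn_small //; lia.
by rewrite modn_small //; lia.
Qed.

Lemma ord_eqE L (x y : 'I_L) : (x == y) = (x == y :> nat).
Proof. by []. Qed.

Lemma ord_eqP L (x y : 'I_L) : x = y <-> x = y :> nat.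
Proof. by split => [->|/val_inj]. Qed.

Ltac cyclic_lia :=
  repeat match goal with
  | x : 'I_?n |- _ =>
      lazymatch goal with
      | _ : is_true (leq (S (nat_of_ord x)) _) |- _ => fail
      | _ => pose proof (ltn_ord x)
      end
  end;
  repeat match goal with H : ?T |- _ => lazymatch type of T with Prop => revert H end end;
  rewrite ?cdistE ?ord_eqE ?ord_eqP ?val_ordS ?val_ord_pred; intros;
  repeat (match goal with
    | |- context[if ?b then _ else _] => case: (boolP b)
    | H : context[if ?b then _ else _] |- _ => move: H; case: (boolP b)
    end; intros);
  lia.

Section CyclicDistance.
Variable L : nat.
Implicit Types x y z j M : 'I_L.

Lemma cdistxx x : cdist x x = 0. Proof. cyclic_lia. Qed.
Lemma cdist_eq0 x y : cdist x y = 0 -> x = y. Proof. cyclic_lia. Qed.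
Lemma ltn_cdist x y : cdist x y < L. Proof. cyclic_lia. Qed.
Lemma cdist_inj x : injective (cdist x). Proof. move=> y z; cyclic_lia. Qed.
Lemma cdist_ordSl x z : z != x -> cdist x z = (cdist (ordS x) z).+1. Proof. cyclic_lia. Qed.
Lemma cdist_ordSr x y : (cdist x y).+1 < L -> cdist x (ordS y) = (cdist x y).+1.
Proof. cyclic_lia. Qed.
Lemma cdist_ord_pred x y : x != y -> (cdist x (ord_pred y)).+1 = cdist x y. Proof. cyclic_lia. Qed.
Lemma cdist_ordS_self x : cdist (ordS x) x = L.-1. Proof. cyclic_lia. Qed.
Lemma cdist_ord_pred_self x : 1 < L -> cdist x (ord_pred x) = L.-1. Proof. cyclic_lia. Qed.
Lemma cdist_add x y z : cdist x y + cdist y z < L -> cdist x z = cdist x y + cdist y z.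
Proof. cyclic_lia. Qed.
Lemma cdist_split x y z : cdist x y < cdist x z -> cdist x y + cdist y z = cdist x z.
Proof. cyclic_lia. Qed.
Lemma ordS_neq x : 1 < L -> ordS x != x. Proof. cyclic_lia. Qed.
Lemma ord_pred_neq x : 1 < L -> ord_pred x != x. Proof. cyclic_lia. Qed.
Lemma cdist_ordSl_lt x z : z != x -> cdist (ordS x) z < L.-1. Proof. cyclic_lia. Qed.

(* The distance [dd] of [T4res]. *)
Definition bdist M x := ((M + L - x - 1) %% L).+1.

Lemma bdistE M x : bdist M x = if x == M then L else cdist x M.
Proof.
rewrite /bdist; have := ltn_ord M; have := ltn_ord x => hx hM.
case: (ltnP x M) => h.
  have -> : M + L - x - 1 = (M - x - 1) + L by lia.
  rewrite modnDr modn_small; cyclic_lia.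
rewrite modn_small; cyclic_lia.
Qed.

Lemma bdist_le M j x : M != j -> (bdist M x <= bdist M j) = (cdist j x < cdist j M).
Proof. rewrite !bdistE; cyclic_lia. Qed.
Lemma bdist_eq1 M x : (bdist M x == 1) = (ordS x == M). Proof. rewrite bdistE; cyclic_lia. Qed.
Lemma bdist_le_self M x : bdist M x <= bdist M M. Proof. rewrite !bdistE; cyclic_lia. Qed.

End CyclicDistance.

Section NextBullet.
Variables n L : nat.
Implicit Types (w : word n L) (x y z : 'I_L) (i k : 'I_n).

Definition next_bullet w x i : bool :=
  [exists y, (w y == (true, i)) && [forall z, (cdist x z < cdist x y) ==> ~~ (w z).1]].

Lemma next_bulletP w x i :
  reflect (exists y, w y = (true, i) /\ forall z, cdist x z < cdist x y -> ~~ (w z).1)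
          (next_bullet w x i).
Proof.
apply: (iffP existsP) => [[y /andP[/eqP hy /forallP hz]]|[y [hy hz]]].
  by exists y; split => // z; apply/implyP/hz.
by exists y; rewrite hy eqxx /=; apply/forallP => z; apply/implyP/hz.
Qed.

Lemma next_bullet_fun w x i i' : next_bullet w x i -> next_bullet w x i' -> i = i'.
Proof.
move=> /next_bulletP[y [hy hz]] /next_bulletP[y' [hy' hz']].
have h1 : ~ cdist x y' < cdist x y by move/hz; rewrite hy'.
have h2 : ~ cdist x y < cdist x y' by move/hz'; rewrite hy.
have e : cdist x y = cdist x y' by lia.
by move: hy; rewrite (cdist_inj e) hy' => -[].
Qed.

Lemma next_bullet_self w x i : w x = (true, i) -> next_bullet w x i.
Proof. by move=> hx; apply/next_bulletP; exists x; split => // z; rewrite cdistxx. Qed.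

Lemma next_bullet_ordS w x i : ~~ (w x).1 -> next_bullet w x i = next_bullet w (ordS x) i.
Proof.
move=> hx; apply/idP/idP => /next_bulletP[y [hy hz]]; apply/next_bulletP; exists y.
all: have yx : y != x by apply/eqP => e; move: hx; rewrite -e hy.
all: split => // z hzl; case: (eqVneq z x) => [->//|zx]; apply: hz.
  by rewrite (cdist_ordSl zx) (cdist_ordSl yx).
by move: hzl; rewrite (cdist_ordSl zx) (cdist_ordSl yx).
Qed.

Lemma next_bullet_exists w x : (exists y, (w y).1) -> exists i, next_bullet w x i.
Proof.
move=> [y0 hy0].
case: (@arg_minnP _ y0 (fun y => (w y).1) (fun y => cdist x y) hy0) => y hy hmin.
exists (w y).2; apply/next_bulletP; exists y; split; first by move: hy; case: (w y) => [[] k].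
by move=> z hz; apply/negP => /hmin; lia.
Qed.

Lemma bulletE w x : (w x).1 -> w x = (true, (w x).2).
Proof. by case: (w x) => [[] k]. Qed.

Lemma boxE w x : ~~ (w x).1 -> w x = (false, (w x).2).
Proof. by case: (w x) => [[] k]. Qed.

Lemma valid_card w k : valid w -> #|[set j | w j == (true, k)]| = 1.
Proof. by case/andP => /forallP /(_ k) /eqP. Qed.

Lemma valid_bullet_inj w x y i : valid w -> w x = (true, i) -> w y = (true, i) -> x = y.
Proof.
move=> /(valid_card i) /eqP /cards1P [a ha] hx hy.
have : x \in [set j | w j == (true, i)] by rewrite inE hx.
have : y \in [set j | w j == (true, i)] by rewrite inE hy.
by rewrite ha !inE => /eqP -> /eqP ->.
Qed.

Lemma valid_bullet_exists w i : valid w -> exists x, w x = (true, i).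
Proof.
move=> /(valid_card i) /eqP /cards1P [a ha].
have : a \in [set j | w j == (true, i)] by rewrite ha inE.
by rewrite inE => /eqP h; exists a.
Qed.

Lemma valid_succ_label w j j2 : valid w -> (w j).1 -> (w j2).1 -> j != j2 ->
  (forall x, 0 < cdist j x -> cdist j x < cdist j j2 -> ~~ (w x).1) ->
  (w j2).2 = ordS (w j).2.
Proof.
case/andP => _ /forallP /(_ j) /forallP /(_ j2) h h1 h2 h3 h4; apply/eqP; apply: (implyP h).
by rewrite h1 h2 h3 /=; apply/forallP => x; apply/implyP => /andP[a b]; apply: h4.
Qed.

Lemma next_bullet_after w x i : 1 < L -> valid w -> w x = (true, i) ->
  next_bullet w (ordS x) (ordS i).
Proof.
move=> hL hv hx; have hxb : (w x).1 by rewrite hx.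
have [i' hi'] := next_bullet_exists (ordS x) (ex_intro _ x hxb).
move: (hi') => /next_bulletP [y [hy hz]].
case: (eqVneq y x) => [e|yx].
  subst y; move: hy hi'; rewrite hx => -[<-] hi'.
  have [x' hx'] := valid_bullet_exists (ordS i) hv.
  case: (eqVneq x' x) => [e|x'x]; first by move: hx'; rewrite e hx => -[<-].
  by have := hz x'; rewrite hx' /= cdist_ordS_self => /(_ (cdist_ordSl_lt x'x)).
have hyb : (w y).1 by rewrite hy.
suff <- : i' = ordS i by [].
have := valid_succ_label hv hxb hyb; rewrite hx hy /= => -> //; first by rewrite eq_sym.
move=> z z0 zl; apply: hz.
have zx : z != x by apply/eqP => e; move: z0; rewrite e cdistxx.
by move: zl; rewrite (cdist_ordSl zx) (cdist_ordSl yx).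
Qed.

Lemma valid_next_bullet w : 1 < L ->
  (forall k, #|[set j | w j == (true, k)]| = 1) ->
  (forall x i, w x = (true, i) -> next_bullet w (ordS x) (ordS i)) -> valid w.
Proof.
move=> hL hc hs; apply/andP; split; first by apply/forallP => k; rewrite hc.
apply/forallP => j; apply/forallP => j2; apply/implyP => /and4P[h1 h2 h3 /forallP h4].
have hA := hs _ _ (bulletE h1).
suff hB : next_bullet w (ordS j) (w j2).2 by rewrite (next_bullet_fun hB hA).
apply/next_bulletP; exists j2; split; first exact: bulletE.
move=> z hz; case: (eqVneq z j) => [e|zj].
  have := @cdist_ordSl_lt _ j j2; rewrite eq_sym h3 => /(_ isT).
  by move: hz; rewrite e cdist_ordS_self; lia.
have j2j : j2 != j by rewrite eq_sym.
by have := h4 z; rewrite (cdist_ordSl zj) (cdist_ordSl j2j) !ltnS hz leq0n.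
Qed.

End NextBullet.

Section SameBullets.
Variables n L : nat.
Implicit Types (w : word n L) (x : 'I_L) (i : 'I_n).

Definition same_bullets w1 w2 := forall x, (w1 x).1 || (w2 x).1 -> w1 x = w2 x.

Lemma same_bullets_sym w1 w2 : same_bullets w1 w2 -> same_bullets w2 w1.
Proof. by move=> h x hx; rewrite h // orbC. Qed.

Lemma same_bullets_fst w1 w2 x : same_bullets w1 w2 -> (w1 x).1 = (w2 x).1.
Proof.
move=> h; case: (boolP ((w1 x).1 || (w2 x).1)) => [/h -> //|].
by rewrite negb_or => /andP[/negPf -> /negPf ->].
Qed.

Lemma same_bullets_eq w1 w2 x i :
  same_bullets w1 w2 -> (w1 x == (true, i)) = (w2 x == (true, i)).
Proof.
move=> h; case: (boolP (w1 x).1) => b; first by rewrite h ?b.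
have b2 : ~~ (w2 x).1 by rewrite -(same_bullets_fst x h).
by rewrite (boxE b) (boxE b2).
Qed.

Lemma same_bullets_next w1 w2 x i :
  same_bullets w1 w2 -> next_bullet w1 x i = next_bullet w2 x i.
Proof.
suff imp : forall w1 w2, same_bullets w1 w2 -> next_bullet w1 x i -> next_bullet w2 x i.
  by move=> h; apply/idP/idP; apply: imp => //; apply: same_bullets_sym.
move=> {}w1 {}w2 h /next_bulletP[y [hy hz]]; apply/next_bulletP; exists y; split.
  by rewrite -h // hy.
by move=> z /hz; rewrite (same_bullets_fst z h).
Qed.

Lemma valid_same_bullets w1 w2 : 1 < L -> same_bullets w1 w2 -> valid w1 -> valid w2.
Proof.
move=> hL h hv; apply: valid_next_bullet => // [k|x i hx].
  by rewrite -(valid_card k hv); apply: eq_card => x; rewrite !inE (same_bullets_eq _ _ h).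
by rewrite -(same_bullets_next _ _ h); apply: next_bullet_after => //; rewrite h // hx orbT.
Qed.

End SameBullets.

Section Swap.
Variables n L : nat.
Implicit Types (w : word n L) (a b j x y z : 'I_L) (i k : 'I_n).

Lemma swapwE w a b x : swapw w a b x = w (tperm a b x).
Proof.
rewrite ffunE; case: tpermP => [->|->|/eqP xa /eqP xb]; rewrite ?eqxx //.
  by case: eqP => [->|].
by rewrite (negPf xa) (negPf xb).
Qed.

Lemma swapwL w a b : swapw w a b a = w b.
Proof. by rewrite swapwE tpermL. Qed.

Lemma swapwR w a b : swapw w a b b = w a.
Proof. by rewrite swapwE tpermR. Qed.

Lemma swapwD w a b x : x != a -> x != b -> swapw w a b x = w x.
Proof. by move=> xa xb; rewrite swapwE tpermD // eq_sym. Qed.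

Lemma card_swapw w a b t : #|[set x | swapw w a b x == t]| = #|[set x | w x == t]|.
Proof.
rewrite -(card_preimset [set x | w x == t] (@perm_inj _ (tperm a b))).
by apply: eq_card => x; rewrite !inE swapwE.
Qed.

Section SwapBack.
Variables (w : word n L) (j : 'I_L) (k : 'I_n).
Hypotheses (hL : 1 < L) (hj : w j = (true, k)) (hb : ~~ (w (ord_pred j)).1).

Let w' := swapw w j (ord_pred j).

Lemma next_bullet_swap_back_imp x i : x != j -> x != ord_pred j ->
  next_bullet w x i -> next_bullet w' x i.
Proof.
move=> xj xj' /next_bulletP[y [hy hz]]; apply/next_bulletP.
have hcp := cdist_ord_pred xj.
case: (eqVneq y j) => [ey|yj].
  subst y; exists (ord_pred j); split; first by rewrite swapwR -hy.
  move=> z hzl.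
  have zj' : z != ord_pred j by apply/eqP => e; move: hzl; rewrite e ltnn.
  have zj : z != j by apply/eqP => e; move: hzl; rewrite e; lia.
  by rewrite swapwD //; apply: hz; lia.
have yj' : y != ord_pred j by apply/eqP => e; move: hb; rewrite -e hy.
exists y; split; first by rewrite swapwD.
move=> z hzl.
case: (eqVneq z j) => [e|zj]; first by move: (hz z hzl); rewrite e hj.
case: (eqVneq z (ord_pred j)) => [e|zj']; last by rewrite swapwD //; apply: hz.
subst z; have : cdist x j <= cdist x y by lia.
rewrite leq_eqVlt => /orP[/eqP/cdist_inj e|/hz]; first by move: yj; rewrite e eqxx.
by rewrite hj.
Qed.

Lemma next_bullet_swap_back x i : x != j -> x != ord_pred j ->
  next_bullet w' x i = next_bullet w x i.
Proof.
move=> xj xj'; apply/idP/idP; last exact: next_bullet_swap_back_imp.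
move=> h1; have hjb : (w j).1 by rewrite hj.
have [i0 h0] := next_bullet_exists x (ex_intro (fun y => (w y).1) j hjb).
by rewrite (next_bullet_fun h1 (next_bullet_swap_back_imp xj xj' h0)).
Qed.

Lemma valid_swap_back : valid w -> valid w'.
Proof.
move=> hv; apply: valid_next_bullet => // [k0|x i hx].
  by rewrite card_swapw; apply: valid_card.
have Sj' : ordS (ord_pred j) = j := ord_predK j.
have jj' : ord_pred j != j := ord_pred_neq j hL.
have hj' : next_bullet w (ord_pred j) k.
  by rewrite (next_bullet_ordS _ hb) Sj'; apply: next_bullet_self.
have into_pred y i0 : y = ord_pred j -> next_bullet w y i0 -> next_bullet w' y i0.
  move=> ->; move/(next_bullet_fun hj') <-.
  by apply: next_bullet_self; rewrite swapwR.
case: (eqVneq x j) => [e|xj]; first by move: hx hb; rewrite e swapwL => ->.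
case: (eqVneq x (ord_pred j)) => [e|xj'].
  subst x; move: hx; rewrite swapwR hj => -[<-].
  rewrite Sj' next_bullet_ordS; last by rewrite swapwL.
  have hs := next_bullet_after hL hv hj.
  case: (eqVneq (ordS j) (ord_pred j)) => [e|e2]; first by apply: into_pred.
  by rewrite next_bullet_swap_back // ordS_neq.
have hx' : w x = (true, i) by rewrite -hx swapwD.
have hs := next_bullet_after hL hv hx'.
case: (eqVneq (ordS x) j) => [e|e1].
  by move: xj'; rewrite -Sj' in e; rewrite (ordS_inj e) eqxx.
case: (eqVneq (ordS x) (ord_pred j)) => [e|e2]; first by apply: into_pred.
by rewrite next_bullet_swap_back.
Qed.

End SwapBack.
End Swap.

Section BackwardMove.
Variables n L : nat.
Implicit Types (w : word n L) (j x y z : 'I_L) (i k : 'I_n).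

Lemma pick_bulletE w j M t : valid w -> w M = (true, t) ->
  odflt j [pick m | w m == (true, t)] = M.
Proof.
move=> hv hM; case: pickP => [m /eqP hm|h] /=; first exact: valid_bullet_inj hm hM.
by move: (h M); rewrite hM eqxx.
Qed.

Lemma T4resE w j k M x : valid w -> w j = (true, k) -> w M = (true, ordS k) -> M != j ->
  T4res w j x = if x == ord_pred j then (true, k)
                else if cdist j x < cdist j M then
                  (if ordS x == M then (false, ordS k) else w (ordS x))
                else w x.
Proof.
move=> hv hj hM Mj; rewrite /T4res ffunE hj /= (pick_bulletE j hv hM).
by rewrite -/(bdist _ _) bdist_le // -/(bdist _ _) bdist_eq1.
Qed.

Lemma T4resE_single w j k x : valid w -> w j = (true, k) -> ordS k = k ->
  T4res w j x = if x == ord_pred j then (true, k) else w (ordS x).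
Proof.
move=> hv hj hk; have hM : w j = (true, ordS k) by rewrite hk.
rewrite /T4res ffunE hj /= (pick_bulletE j hv hM) -/(bdist _ _) bdist_le_self.
rewrite -/(bdist _ _) bdist_eq1; case: eqP => // xj; case: eqP => // Sx.
by case: xj; rewrite -Sx ordSK.
Qed.

Definition box_invariant w (Q : 'I_n -> 'I_n -> bool) :=
  forall x i, ~~ (w x).1 -> next_bullet w x i -> Q i (w x).2.

Definition gap_size w k := #|[set x | ~~ (w x).1 && next_bullet w x k]|.

(* [w'] arises from [w] by moving bullet [k], at [j], back over the box [Box_l]: the
   boxes in the gap [j .. M) of bullet [k+1] come from that gap of [w] or are the
   moved box (relabelled [Box_{k+1}] by (T4)); all other boxes are untouched. *)
Definition moved_back w w' j k l := exists M, forall x, ~~ (w' x).1 ->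
  if cdist j x < cdist j M then
    next_bullet w' x (ordS k) /\
    (w' x = (false, if l == k then ordS k else l) \/
     exists y, [/\ ~~ (w y).1, next_bullet w y (ordS k) & w' x = w y])
  else w' x = w x /\ forall i, next_bullet w' x i = next_bullet w x i.

Section Move.
Variables (w : word n L) (j M : 'I_L) (k l : 'I_n).
Hypotheses (hn : 1 < n) (hnL : n < L) (hv : valid w).
Hypotheses (hj : w j = (true, k)) (hl : w (ord_pred j) = (false, l)).
Hypothesis hM : w M = (true, ordS k).

Let hL : 1 < L. Proof. lia. Qed.
Let hb : ~~ (w (ord_pred j)).1. Proof. by rewrite hl. Qed.
Let ws := swapw w j (ord_pred j).

Let Mj : M != j.
Proof.
apply/eqP => e; move: hM; rewrite e hj => -[] /eqP.
by rewrite eq_sym (negPf (ordS_neq k hn)).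
Qed.

Let Mj' : M != ord_pred j. Proof. by apply/eqP => e; move: hb; rewrite -e hM. Qed.

Let pos_cdist x : x != j -> 0 < cdist j x.
Proof. by move=> xj; case: posnP => // /cdist_eq0 e; move: xj; rewrite e eqxx. Qed.

Let pred_outside : ~~ (cdist j (ord_pred j) < cdist j M).
Proof. by rewrite cdist_ord_pred_self // -leqNgt; have := ltn_cdist j M; lia. Qed.

Lemma gap_box y : 0 < cdist j y -> cdist j y < cdist j M ->
  ~~ (w y).1 /\ next_bullet w y (ordS k).
Proof.
move/next_bulletP: (next_bullet_after hL hv hj) => [y0 [hy0 hz0]].
have e0 : y0 = M := valid_bullet_inj hv hy0 hM; subst y0.
have box y1 : 0 < cdist j y1 -> cdist j y1 < cdist j M -> ~~ (w y1).1.
  move=> h1 h2; have y1j : y1 != j by apply/eqP => e; move: h1; rewrite e cdistxx.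
  by apply: hz0; move: h2; rewrite (cdist_ordSl y1j) (cdist_ordSl Mj).
move=> h1 h2; split; first exact: box.
apply/next_bulletP; exists M; split => // z hz.
have ht := cdist_split h2.
have hadd : cdist j z = cdist j y + cdist y z by apply: cdist_add; have := ltn_cdist j M; lia.
by apply: box; lia.
Qed.

Lemma next_bullet_swap_gap x : cdist j x < cdist j M -> next_bullet ws x (ordS k).
Proof.
move=> hx; apply/next_bulletP; exists M; split; first by rewrite swapwD.
move=> z hz; have ht := cdist_split hx.
have hadd : cdist j z = cdist j x + cdist x z by apply: cdist_add; have := ltn_cdist j M; lia.
case: (eqVneq z j) => [->|zj]; first by rewrite swapwL.
have zl : cdist j z < cdist j M by lia.
have zj' : z != ord_pred j by apply/eqP => e; move: pred_outside; rewrite -e zl.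
by rewrite swapwD //; case: (gap_box (pos_cdist zj) zl).
Qed.

Lemma moved_back_swap : l != k -> moved_back w ws j k l.
Proof.
move=> lk; exists M => x hbx; case: ifP => xI.
  split; first exact: next_bullet_swap_gap.
  case: (eqVneq x j) => [->|xj]; first by left; rewrite swapwL hl (negPf lk).
  have xj' : x != ord_pred j by apply/eqP => e; move: hbx; rewrite e swapwR hj.
  right; exists x; rewrite swapwD //.
  by case: (gap_box (pos_cdist xj) xI).
have xj : x != j by apply/eqP => e; move: xI; rewrite e cdistxx (pos_cdist Mj).
have xj' : x != ord_pred j by apply/eqP => e; move: hbx; rewrite e swapwR hj.
by rewrite swapwD //; split => // i; rewrite (next_bullet_swap_back hL hj hb).
Qed.

Section T4.
Hypothesis hlk : l = k.

Let T4E x := T4resE x hv hj hM Mj.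

Let gap_succ x : cdist j x < cdist j M -> ordS x != M ->
  [/\ 0 < cdist j (ordS x), cdist j (ordS x) < cdist j M,
      ~~ (w (ordS x)).1 & next_bullet w (ordS x) (ordS k)].
Proof.
move=> xI SM; have h1 : (cdist j x).+1 < L by have := ltn_cdist j M; lia.
have h2 : cdist j (ordS x) < cdist j M.
  rewrite cdist_ordSr // ltn_neqAle xI andbT; apply: contra SM => /eqP e.
  by rewrite -(cdist_ordSr h1) in e; rewrite (cdist_inj e).
have h0 : 0 < cdist j (ordS x) by rewrite cdist_ordSr.
by case: (gap_box h0 h2).
Qed.

Lemma same_bullets_T4 : same_bullets ws (T4res w j).
Proof.
move=> x; rewrite T4E; case: (eqVneq x (ord_pred j)) => [->|xj']; first by rewrite swapwR hj.
case: ifP => xI; last first.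
  by rewrite swapwD //; apply/eqP => e; move: xI; rewrite e cdistxx (pos_cdist Mj).
have wsb : ~~ (ws x).1.
  case: (eqVneq x j) => [->|xj]; first by rewrite /ws swapwL.
  by rewrite /ws swapwD //; case: (gap_box (pos_cdist xj) xI).
rewrite (negPf wsb) /=; case: ifP => // /negbT SM.
by case: (gap_succ xI SM) => _ _ /negPf ->.
Qed.

Lemma moved_back_T4 : moved_back w (T4res w j) j k l.
Proof.
have sk := same_bullets_T4.
exists M => x hbx; case: ifP => xI.
  split; first by rewrite -(same_bullets_next _ _ sk); exact: next_bullet_swap_gap.
  rewrite T4E; case: (eqVneq x (ord_pred j)) => [e|xj']; first by move: xI; rewrite e (negPf pred_outside).
  rewrite xI; case: ifP => SM; [left; rewrite hlk eqxx | right] => //.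
  by exists (ordS x); case: (gap_succ xI (negbT SM)).
have xj : x != j by apply/eqP => e; move: xI; rewrite e cdistxx (pos_cdist Mj).
have xj' : x != ord_pred j by apply/eqP => e; move: hbx; rewrite e T4E eqxx.
have -> : T4res w j x = w x by rewrite T4E (negPf xj') xI.
by split => // i; rewrite -(same_bullets_next _ _ sk) (next_bullet_swap_back hL hj hb).
Qed.

End T4.

Lemma bwd_moved_back :
  exists w', [/\ bwd w j = Some w', same_bullets ws w' & moved_back w w' j k l].
Proof.
case: (eqVneq l k) => [elk|lk].
  exists (T4res w j); split; [|exact: same_bullets_T4|exact: moved_back_T4].
  by rewrite /bwd hj hl /= elk eqxx.
exists ws; split => //; last exact: moved_back_swap.
by rewrite /bwd hj hl /= (negPf lk).
Qed.

End Move.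
End BackwardMove.

Definition back_step n L : rel (word n L) :=
  fun w w' => [&& valid w, valid w' & [exists j, bwd w j == Some w']].

Section BackSteps.
Variables n L : nat.
Implicit Types (w : word n L) (j x : 'I_L) (i k l : 'I_n) (Q : 'I_n -> 'I_n -> bool).
Implicit Type m : nat.

Lemma moved_back_invariant w w' j k l Q : moved_back w w' j k l ->
  box_invariant w Q -> Q (ordS k) (if l == k then ordS k else l) -> box_invariant w' Q.
Proof.
move=> [M H] hQ hQ' x i hx hi; move: (H x hx); case: ifP => _.
  by move=> [h1 [->|[y [hy1 hy2 ->]]]]; rewrite -(next_bullet_fun h1 hi) //; apply: hQ.
by move=> [e1 e2]; rewrite e1; apply: hQ; [rewrite -e1 | rewrite -e2].
Qed.

Lemma moved_back_gap_size w w' j k l : 1 < n -> moved_back w w' j k l ->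
  (w' (ord_pred j)).1 -> ~~ (w (ord_pred j)).1 -> next_bullet w (ord_pred j) k ->
  gap_size w' k < gap_size w k.
Proof.
move=> hn [M H] hb' hb hk; apply/proper_card/properP; split.
  apply/subsetP => x; rewrite !inE => /andP[hx hxk]; move: (H x hx); case: ifP => _.
    by move=> [/(next_bullet_fun hxk) e _]; move: (ordS_neq k hn); rewrite -e eqxx.
  by move=> [e1 e2]; rewrite -e1 hx -e2.
by exists (ord_pred j); rewrite !inE ?hb' // hb.
Qed.

Lemma back_move w j k l : 1 < n -> n < L -> valid w ->
  w j = (true, k) -> w (ord_pred j) = (false, l) ->
  exists w', [/\ back_step w w', w' (ord_pred j) = (true, k),
    forall i x, i != k -> (w' x == (true, i)) = (w x == (true, i)),
    forall Q, box_invariant w Q -> Q (ordS k) (if l == k then ordS k else l) ->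
      box_invariant w' Q
  & gap_size w' k < gap_size w k].
Proof.
move=> hn hnL hv hj hl; have hL : 1 < L by lia.
have hb : ~~ (w (ord_pred j)).1 by rewrite hl.
have [M hM] := valid_bullet_exists (ordS k) hv.
have [w' [hbwd sk hmv]] := bwd_moved_back hn hnL hv hj hl hM.
have hv' : valid w' := valid_same_bullets hL sk (valid_swap_back hL hj hb hv).
have hj' : w' (ord_pred j) = (true, k) by rewrite -sk ?swapwR ?hj.
exists w'; split => //.
- by rewrite /back_step hv hv' /=; apply/existsP; exists j; rewrite hbwd.
- move=> i x ik; rewrite -(same_bullets_eq _ _ sk).
  have kf : ((true, k) == (true, i)) = false by rewrite xpair_eqE /= eq_sym (negPf ik).
  case: (eqVneq x j) => [->|xj]; first by rewrite swapwL hj (boxE hb) kf.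
  case: (eqVneq x (ord_pred j)) => [->|xj']; last by rewrite swapwD.
  by rewrite swapwR hj (boxE hb) kf.
- by move=> Q; apply: moved_back_invariant hmv.
apply: (moved_back_gap_size hn hmv _ hb); first by rewrite hj'.
by rewrite (next_bullet_ordS _ hb) ord_predK; apply: next_bullet_self.
Qed.

Lemma gap_size_pos w j k : 1 < L -> valid w -> w j = (true, k) ->
  0 < gap_size w k -> ~~ (w (ord_pred j)).1.
Proof.
move=> hL hv hj; rewrite /gap_size card_gt0 => /set0Pn[x].
rewrite inE => /andP[hx /next_bulletP[y [hy hz]]].
have e := valid_bullet_inj hv hy hj; subst y.
have xj : x != j by apply/eqP => e; move: hx; rewrite e hj.
by apply: hz; rewrite -(cdist_ord_pred xj).
Qed.

Lemma gap_size0 w k x : gap_size w k = 0 -> ~~ (w x).1 -> ~~ next_bullet w x k.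
Proof. by move=> h hx; move: (card0_eq h x); rewrite !inE hx => /negbT. Qed.

(* The hypothesis on [Q]: it tolerates a box moved from the gap of [k] to that of [k+1]. *)
Lemma empty_gap Q k : 1 < n -> n < L ->
  (forall l, Q k l -> Q (ordS k) (if l == k then ordS k else l)) ->
  forall w, valid w -> box_invariant w Q ->
  exists w', [/\ connect (@back_step n L) w w', valid w', box_invariant w' Q,
     gap_size w' k = 0 & forall i x, i != k -> (w' x == (true, i)) = (w x == (true, i))].
Proof.
move=> hn hnL hQ w; have hL : 1 < L by lia.
elim: {w}(gap_size w k).+1 {-2}w (ltnSn (gap_size w k)) => // m IH w hm hv hb.
case: (posnP (gap_size w k)) => [e|gp]; first by exists w.
have [j hj] := valid_bullet_exists k hv.
have hbj := gap_size_pos hL hv hj gp.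
have hj' : next_bullet w (ord_pred j) k.
  by rewrite (next_bullet_ordS _ hbj) ord_predK; apply: next_bullet_self.
have [w1 [hs1 _ hsk1 hb1 hg1]] := back_move hn hnL hv hj (boxE hbj).
have hv1 : valid w1 by case/and3P: hs1.
have [w' [hr hv' hB' hg' hsk']] :=
  IH w1 (leq_trans hg1 hm) hv1 (hb1 Q hb (hQ _ (hb _ _ hbj hj'))).
exists w'; split => //; first exact: connect_trans (connect1 hs1) hr.
by move=> i x ik; rewrite hsk' // hsk1.
Qed.

Lemma ord_eq_n1 (a b : 'I_n) : n = 1 -> a = b.
Proof. by move=> n1; apply/val_inj; move: (ltn_ord a) (ltn_ord b) => /=; lia. Qed.

Lemma back_move_single w j k : n = 1 -> n < L -> valid w -> w j = (true, k) ->
  exists w', back_step w w' /\ w' (ord_pred j) = (true, k).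
Proof.
move=> n1 hnL hv hj; have hL : 1 < L by lia.
have at_j x : (w x).1 -> x = j.
  by move=> hx; apply: (valid_bullet_inj hv (bulletE hx)); rewrite hj (ord_eq_n1 k (w x).2 n1).
have hb : ~~ (w (ord_pred j)).1 by apply/negP => /at_j; apply/eqP; apply: ord_pred_neq.
have hT4 x := T4resE_single x hv hj (ord_eq_n1 (ordS k) k n1).
have sk : same_bullets (swapw w j (ord_pred j)) (T4res w j).
  move=> x; rewrite hT4; case: (eqVneq x (ord_pred j)) => [->|xj']; first by rewrite swapwR hj.
  have b1 : ~~ (w (ordS x)).1.
    by apply: contra xj' => /at_j <-; rewrite ordSK.
  have b2 : ~~ (swapw w j (ord_pred j) x).1.
    case: (eqVneq x j) => [->|xj]; first by rewrite swapwL.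
    by rewrite swapwD //; apply: contra xj => /at_j ->.
  by rewrite (negPf b1) (negPf b2).
have hv' := valid_same_bullets hL sk (valid_swap_back hL hj hb hv).
exists (T4res w j); split; last by rewrite hT4 eqxx.
rewrite /back_step hv hv' /=; apply/existsP; exists j.
by rewrite /bwd hj (boxE hb) /= (ord_eq_n1 (w (ord_pred j)).2 k n1) eqxx.
Qed.

Definition gaps_cleared m w := box_invariant w (fun i _ => (i == 0 :> nat) || (m <= i)).

Lemma reach_gaps_cleared m w : 1 < n -> n < L -> m <= n -> valid w ->
  exists w', [/\ connect (@back_step n L) w w', valid w' & gaps_cleared m w'].
Proof.
move=> hn hnL; elim: m => [|m IH] hm hv.
  by exists w; split => // x i _ _; rewrite orbT.
have [w1 [hr1 hv1 hb1]] := IH (ltnW hm) hv.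
case: (posnP m) => [m0|m0].
  by exists w1; split => // x i hx hi; move: (hb1 x i hx hi); rewrite m0; lia.
have mn : m < n by lia.
pose mm := Ordinal mn.
have hQ : (mm == 0 :> nat) || (m <= mm) -> (ordS mm == 0 :> nat) || (m <= ordS mm).
  by rewrite val_ordS /=; case: ifP => _ //=; rewrite leqnSn orbT.
have [w' [hr' hv' hb' hg' _]] :=
  @empty_gap (fun i _ => (i == 0 :> nat) || (m <= i)) mm hn hnL (fun _ => hQ) w1 hv1 hb1.
exists w'; split => //; first exact: connect_trans hr1 hr'.
move=> x i hx hi; have := hb' x i hx hi.
case: (eqVneq i mm) => [e|ik]; first by move: hi; rewrite e (negPf (gap_size0 hg' hx)).
have : i != m :> nat by []; lia.
Qed.

Definition sorted_from m w := box_invariant w (fun i l => (m <= i) && (i <= l)).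

Lemma reach_sorted_from (top : 'I_n) m w : 1 < n -> n < L -> top = n.-1 :> nat ->
  m <= n.-1 -> valid w -> sorted_from 0 w ->
  exists w', [/\ connect (@back_step n L) w w', valid w', sorted_from m w' &
     forall x, (w' x == (true, top)) = (w x == (true, top))].
Proof.
move=> hn hnL htop; elim: m => [|m IH] hm hv hb; first by exists w.
have [w1 [hr1 hv1 hb1 hs1]] := IH (ltnW hm) hv hb.
have mn : m < n by lia.
pose mm := Ordinal mn.
have SkE : ordS mm = m.+1 :> nat by rewrite val_ordS /=; case: ifP => // /eqP; lia.
have hQ l : (m <= mm) && (mm <= l) ->
    (m <= ordS mm) && (ordS mm <= (if l == mm then ordS mm else l)).
  rewrite SkE /=; case: (eqVneq l mm) => [_|lk]; first by move=> _; rewrite SkE leqnSn leqnn.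
  by have : l != m :> nat by []; lia.
have [w' [hr' hv' hb' hg' hs']] :=
  @empty_gap (fun i l => (m <= i) && (i <= l)) mm hn hnL hQ w1 hv1 hb1.
exists w'; split => //; first exact: connect_trans hr1 hr'.
  move=> x i hx hi; have := hb' x i hx hi.
  case: (eqVneq i mm) => [e|ik]; first by move: hi; rewrite e (negPf (gap_size0 hg' hx)).
  by have : i != m :> nat by []; lia.
move=> x; rewrite hs' ?hs1 //; apply/eqP => e.
by move: htop; rewrite e /=; lia.
Qed.

End BackSteps.

Section Canonical.
Variables (n L : nat) (top : 'I_n).
Hypotheses (hnL : n < L) (htop : top = n.-1 :> nat).
Implicit Types (w : word n L) (p q x : 'I_L) (i : 'I_n).

Let hL : 1 < L. Proof. by have := ltn_ord top; lia. Qed.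

(* Together with validity: bullets [0], ..., [n-2] side by side, then [L - n] copies of
   [Box_top], then bullet [top]. *)
Definition canonical w := box_invariant w (fun i l => (i == top) && (l == top)).

Lemma canonical_sorted w : sorted_from n.-1 w -> canonical w.
Proof.
move=> h x i hx hi; move: (h x i hx hi); rewrite !ord_eqE htop.
by have := ltn_ord i; have := ltn_ord (w x).2; lia.
Qed.

Lemma canonical_single w : n = 1 -> canonical w.
Proof. by move=> n1 x i _ _; rewrite (ord_eq_n1 i top n1) (ord_eq_n1 (w x).2 top n1) eqxx. Qed.

Lemma exists_box w : valid w -> exists x, ~~ (w x).1.
Proof.
move=> hv; case: (boolP [exists x, ~~ (w x).1]) => [/existsP //|/existsPn h]; exfalso.
have hb x : (w x).1 by rewrite -[_.1]negbK h.
have inj : injective (fun x => (w x).2).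
  by move=> x y e; apply: (valid_bullet_inj hv (bulletE (hb x))); rewrite e bulletE.
by have := leq_card _ inj; rewrite !card_ord; lia.
Qed.

Lemma reach_canonical w : valid w ->
  exists w', [/\ connect (@back_step n L) w w', valid w' & canonical w'].
Proof.
move=> hv; case: (eqVneq n 1) => [n1|n1]; first by exists w; split => //; apply: canonical_single.
have hn : 1 < n by have := ltn_ord top; lia.
have [w1 [hr1 hv1 hb1]] := reach_gaps_cleared hn hnL (leqnn n) hv.
have hb1' : sorted_from 0 w1.
  move=> x i hx hi; move: (hb1 x i hx hi) => /orP[/eqP -> //|].
  by have := ltn_ord i; lia.
have [w' [hr' hv' hc' _]] := reach_sorted_from hn hnL htop (leqnn _) hv1 hb1'.
exists w'; split => //; last exact: canonical_sorted.
exact: connect_trans hr1 hr'.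
Qed.

Definition canonical_next (t : letter n) : letter n :=
  if t.1 then (if ordS t.2 == top then (false, top) else (true, ordS t.2)) else (false, top).

Lemma canonical_recurrence w p x : valid w -> canonical w -> w p = (true, top) -> x != p ->
  w x = canonical_next (w (ord_pred x)).
Proof.
move=> hv hc hp xp; have hex : exists y, (w y).1 by exists p; rewrite hp.
have box y i : ~~ (w y).1 -> next_bullet w y i -> i = top /\ w y = (false, top).
  by move=> hy hi; case/andP: (hc y i hy hi) => /eqP -> /eqP e; rewrite (boxE hy) e.
have not_top y : (w y).1 -> y != p -> (w y).2 != top.
  by move=> hy; apply: contra => /eqP e; apply/eqP/(valid_bullet_inj hv _ hp); rewrite (bulletE hy) e.
rewrite /canonical_next; case: (boolP (w (ord_pred x)).1) => hx'.
  have hs := next_bullet_after hL hv (bulletE hx'); rewrite ord_predK in hs.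
  case: (boolP (w x).1) => hxb; last by case: (box _ _ hxb hs) => -> ->; rewrite eqxx.
  have e := next_bullet_fun (next_bullet_self (bulletE hxb)) hs.
  by have := not_top _ hxb xp; rewrite e => /negPf ->; rewrite (bulletE hxb) e.
have [i hi] := next_bullet_exists (ord_pred x) hex.
case: (box _ _ hx' hi) => ei _; rewrite ei (next_bullet_ordS _ hx') ord_predK in hi.
case: (boolP (w x).1) => hxb; last by case: (box _ _ hxb hi).
have := not_top _ hxb xp.
by rewrite -(next_bullet_fun (next_bullet_self (bulletE hxb)) hi) eqxx.
Qed.

Lemma canonical_eq w1 w2 p : valid w1 -> valid w2 -> canonical w1 -> canonical w2 ->
  w1 p = (true, top) -> w2 p = (true, top) -> w1 = w2.
Proof.
move=> hv1 hv2 hc1 hc2 h1 h2; apply/ffunP => x.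
elim: {x}(cdist p x) {-2}x (erefl (cdist p x)) => [|d IH] x hd.
  by rewrite -(cdist_eq0 hd) h1 h2.
have xp : x != p by apply/eqP => e; move: hd; rewrite e cdistxx.
have hd' : cdist p (ord_pred x) = d.
  by apply/eqP; rewrite -eqSS (cdist_ord_pred (x := p)) 1?eq_sym // -hd.
by rewrite (canonical_recurrence hv1 hc1 h1 xp) (canonical_recurrence hv2 hc2 h2 xp) IH.
Qed.

Lemma canonical_rotate w p : valid w -> canonical w -> w p = (true, top) ->
  exists w', [/\ connect (@back_step n L) w w', valid w', canonical w'
     & w' (ord_pred p) = (true, top)].
Proof.
move=> hv hc hp; have hpb : (w p).1 by rewrite hp.
case: (eqVneq n 1) => [n1|n1].
  have [w' [hs hp']] := back_move_single n1 hnL hv hp.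
  exists w'; split => //; [exact: connect1 | by case/and3P: hs | exact: canonical_single].
have hn : 1 < n by have := ltn_ord top; lia.
have hb : ~~ (w (ord_pred p)).1.
  have [x hx] := exists_box hv.
  have [i hi] := next_bullet_exists x (ex_intro _ p hpb).
  case/andP: (hc x i hx hi) => /eqP ei _.
  apply: (gap_size_pos hL hv hp); rewrite card_gt0; apply/set0Pn; exists x.
  by rewrite inE hx -ei hi.
have hl : w (ord_pred p) = (false, top).
  have [i hi] := next_bullet_exists (ord_pred p) (ex_intro _ p hpb).
  by case/andP: (hc _ _ hb hi) => _ /eqP e; rewrite (boxE hb) e.
have [w1 [hs1 hp1 _ hinv _]] := back_move hn hnL hv hp hl.
have hv1 : valid w1 by case/and3P: hs1.
have hs0 : sorted_from 0 w1.
  apply: hinv; last by rewrite eqxx /= leqnn.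
  by move=> y i hy hi; case/andP: (hc y i hy hi) => /eqP -> /eqP ->; rewrite leqnn.
have [w' [hr' hv' hsort hs']] := reach_sorted_from hn hnL htop (leqnn _) hv1 hs0.
exists w'; split => //; first exact: connect_trans (connect1 hs1) hr'.
  exact: canonical_sorted.
by apply/eqP; rewrite hs' hp1.
Qed.

Lemma canonical_move_top w p q : valid w -> canonical w -> w p = (true, top) ->
  exists w', [/\ connect (@back_step n L) w w', valid w', canonical w' & w' q = (true, top)].
Proof.
elim: {p}(cdist q p) {-2}p (erefl (cdist q p)) w => [|d IH] p hd w hv hc hp.
  by exists w; split => //; rewrite (cdist_eq0 hd).
have qp : q != p by apply/eqP => e; move: hd; rewrite e cdistxx.
have [w1 [hr1 hv1 hc1 hp1]] := canonical_rotate hv hc hp.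
have hd1 : cdist q (ord_pred p) = d by apply/eqP; rewrite -eqSS cdist_ord_pred // -hd.
have [w' [hr' hv' hc' hq']] := IH _ hd1 w1 hv1 hc1 hp1.
by exists w'; split => //; apply: connect_trans hr1 hr'.
Qed.

Lemma connect_canonical w z : valid w -> valid z -> canonical z -> connect (@back_step n L) w z.
Proof.
move=> hv hvz hcz; have [c [hr hvc hcc]] := reach_canonical hv.
have [pz hpz] := valid_bullet_exists top hvz.
have [pc hpc] := valid_bullet_exists top hvc.
have [c' [hr' hvc' hcc' hpc']] := canonical_move_top pz hvc hcc hpc.
by rewrite -(canonical_eq hvc' hvz hcc' hcz hpc' hpz); apply: connect_trans hr hr'.
Qed.

End Canonical.

Local Open Scope ring_scope.

Section StationaryUniqueness.
Variables (R : realType) (T : finType) (S : {set T}) (r : T -> T -> R).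
Hypothesis r_ge0 : forall x y, 0 <= r x y.
Implicit Types (x y z : T) (mu : T -> R).

Definition balanced mu := forall y, y \in S ->
  \sum_(x in S) mu x * r x y = mu y * \sum_(z in S) r y z.

Definition positive_step : rel T := fun x y => [&& x \in S, y \in S & 0 < r x y].

Let out_ge0 y : 0 <= \sum_(z in S) r y z.
Proof. by apply: sumr_ge0 => z _; apply: r_ge0. Qed.

(* The inflow into each state dominates the outflow, and total inflow equals total
   outflow, so every one of these inequalities is an equality. *)
Lemma balanced_norm mu : balanced mu -> balanced (fun x => `|mu x|).
Proof.
move=> hb.
have hle y : y \in S -> `|mu y| * \sum_(z in S) r y z <= \sum_(x in S) `|mu x| * r x y.
  move=> hy; rewrite -(ger0_norm (out_ge0 y)) -normrM -(hb _ hy).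
  apply: le_trans (ler_norm_sum _ _ _) _.
  by apply: ler_sum => x _; rewrite normrM (ger0_norm (r_ge0 _ _)).
have hsum : \sum_(y in S)
    (\sum_(x in S) `|mu x| * r x y - `|mu y| * \sum_(z in S) r y z) = 0.
  rewrite sumrB exchange_big /= (eq_bigr (fun x => `|mu x| * \sum_(z in S) r x z)) ?subrr //.
  by move=> x _; rewrite mulr_sumr.
have hge y : y \in S -> 0 <= \sum_(x in S) `|mu x| * r x y - `|mu y| * \sum_(z in S) r y z.
  by move=> hy; rewrite subr_ge0 hle.
by move=> y hy; apply/eqP; rewrite -subr_eq0; apply/eqP; apply: (psumr_eq0P hge hsum hy).
Qed.

Lemma balanced_step_pos mu x y : (forall z, 0 <= mu z) -> balanced mu ->
  positive_step x y -> 0 < mu x -> 0 < mu y.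
Proof.
move=> hge hb /and3P[hx hy hr] hpos.
have : 0 < \sum_(u in S) mu u * r u y.
  rewrite (bigD1 x) //= ltr_pwDl ?mulr_gt0 //.
  by apply: sumr_ge0 => u _; apply: mulr_ge0.
rewrite (hb _ hy) lt_def => /andP[+ _]; rewrite mulf_eq0 negb_or => /andP[ne _].
by rewrite lt_def ne hge.
Qed.

Lemma balanced_connect_pos mu x y : (forall z, 0 <= mu z) -> balanced mu ->
  connect positive_step x y -> 0 < mu x -> 0 < mu y.
Proof.
move=> hge hb /connectP[s]; elim: s x => [x _ -> //|u s IH] x /= /andP[hxu hs] hy hx.
exact: IH hs hy (balanced_step_pos hge hb hxu hx).
Qed.

(* [pi1 - c pi2] vanishes at [z] for a suitable [c]; by [balanced_norm] its absolute
   value is balanced as well, so a nonzero value anywhere would propagate to [z]. *)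
Lemma balanced_unique z (pi1 pi2 : T -> R) : z \in S ->
  (forall x, x \in S -> connect positive_step x z) ->
  (forall x, x \notin S -> pi1 x = 0) -> (forall x, x \notin S -> pi2 x = 0) ->
  (forall x, 0 <= pi2 x) -> \sum_(x in S) pi1 x = 1 -> \sum_(x in S) pi2 x = 1 ->
  balanced pi1 -> balanced pi2 -> pi1 =1 pi2.
Proof.
move=> hz hreach h01 h02 hge2 hs1 hs2 hb1 hb2.
have pz : 0 < pi2 z.
  have [|x /andP[hx hpx]] := @psumr_neq0P _ _ (mem S) pi2 (fun x _ => hge2 x).
    by rewrite hs2; apply/eqP/oner_neq0.
  exact: (balanced_connect_pos hge2 hb2 (hreach x hx)).
pose c := pi1 z / pi2 z; pose mu x := pi1 x - c * pi2 x.
have hbmu : balanced mu.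
  move=> y hy; rewrite /mu (eq_bigr (fun x => pi1 x * r x y - c * (pi2 x * r x y))).
    by rewrite sumrB -mulr_sumr hb1 // hb2 // mulrA -mulrBl.
  by move=> x _; rewrite mulrBl mulrA.
have mu0 x : x \in S -> mu x = 0.
  move=> hx; apply/eqP; rewrite -normr_eq0; apply/negPn/negP => ne.
  have := balanced_connect_pos (fun u => normr_ge0 (mu u)) (balanced_norm hbmu) (hreach x hx).
  have pos : 0 < `|mu x| by rewrite lt_def ne normr_ge0.
  by rewrite /mu /c divfK ?gt_eqF // subrr normr0 ltxx => /(_ pos).
have e1 x : x \in S -> pi1 x = c * pi2 x by move=> hx; apply/eqP; rewrite -subr_eq0 -/(mu x) mu0.
have c1 : c = 1.
  by rewrite -hs1 -[c]mulr1 -hs2 mulr_sumr; apply: eq_bigr => x hx; rewrite e1.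
move=> x; case: (boolP (x \in S)) => hx; first by rewrite e1 // c1 mul1r.
by rewrite h01 // h02.
Qed.

End StationaryUniqueness.

Section Rates.
Variables (R : realType) (n L : nat) (p q : 'I_n -> R).
Hypotheses (hp : forall k, 0 < p k) (hq : forall k, 0 < q k).
Implicit Types w : word n L.

Let jump_ge0 (o : option (word n L)) w' (c : R) : 0 < c ->
  0 <= (if o is Some v then (v == w')%:R * c else 0).
Proof. by move=> hc; case: o => [v|]; rewrite ?lexx // mulr_ge0 ?ler0n ?ltW. Qed.

Lemma rate_ge0 w w' : 0 <= rate p q w w'.
Proof. by apply: sumr_ge0 => j _; rewrite addr_ge0 ?jump_ge0 ?hp ?hq. Qed.

Lemma back_step_positive w w' : back_step w w' -> positive_step (Omega n L) (rate p q) w w'.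
Proof.
case/and3P=> hv hv' /existsP[j /eqP hb]; rewrite /positive_step !inE hv hv' /=.
rewrite /rate (bigD1 j) //= hb eqxx mul1r.
apply: ltr_wpDr; first by apply: sumr_ge0 => i _; rewrite addr_ge0 ?jump_ge0 ?hp ?hq.
exact: ltr_wpDl (jump_ge0 _ _ (hp _)) (hq _).
Qed.

Lemma stationary_unique (pi1 pi2 : word n L -> R) : (0 < n)%N -> (n < L)%N ->
  stationary p q pi1 -> stationary p q pi2 -> pi1 =1 pi2.
Proof.
move=> hn hnL [h01 _ hs1 hb1] [h02 hge2 hs2 hb2].
have [w0 hw0] : exists w0, w0 \in Omega n L.
  case: (set_0Vmem (Omega n L)) => [e|[w0 hw0]]; last by exists w0.
  by move: hs1; rewrite e big_set0 => /eqP; rewrite eq_sym oner_eq0.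
have top_lt : (n.-1 < n)%N by lia.
have htop : Ordinal top_lt = n.-1 :> nat by [].
have hv0 : valid w0 by rewrite inE in hw0.
have [z [_ hz hcz]] := reach_canonical hnL htop hv0.
have hzS : z \in Omega n L by rewrite inE.
have hreach x : x \in Omega n L -> connect (positive_step (Omega n L) (rate p q)) x z.
  rewrite inE => hx; apply: connect_sub (connect_canonical hnL htop hx hz hcz).
  by move=> u v /back_step_positive; apply: connect1.
exact: (balanced_unique (@rate_ge0) hzS hreach h01 h02 hge2 hs1 hs2 hb1 hb2).
Qed.

End Rates.

Section Relabel.
Variables n L : nat.
Implicit Types (w : word n L) (a b j : 'I_L).

Definition relabel w : word n L := [ffun x => ((w x).1, ordS (w x).2)].
Definition unrelabel w : word n L := [ffun x => ((w x).1, ord_pred (w x).2)].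

Lemma relabelK : cancel relabel unrelabel.
Proof. by move=> w; apply/ffunP => x; rewrite !ffunE /= ordSK; case: (w x). Qed.

Lemma unrelabelK : cancel unrelabel relabel.
Proof. by move=> w; apply/ffunP => x; rewrite !ffunE /= ord_predK; case: (w x). Qed.

Lemma relabel_inj : injective relabel.
Proof. exact: can_inj relabelK. Qed.

Lemma relabel_bullet w x t : (relabel w x == (true, t)) = (w x == (true, ord_pred t)).
Proof.
rewrite ffunE; case: (w x) => b i /=; rewrite !xpair_eqE; congr (_ && _).
by apply/eqP/eqP => [<-|->]; rewrite ?ordSK ?ord_predK.
Qed.

Lemma swapw_relabel w a b : swapw (relabel w) a b = relabel (swapw w a b).
Proof. by apply/ffunP => x; rewrite swapwE ![relabel _ _]ffunE swapwE. Qed.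

Lemma T2res_relabel w j : T2res (relabel w) j = relabel (T2res w j).
Proof.
apply/ffunP => x; rewrite /T2res !ffunE /=.
have -> : [pick m | relabel w m == (true, ord_pred (ordS (w j).2))] =
          [pick m | w m == (true, ord_pred (w j).2)].
  by apply: eq_pick => m /=; rewrite relabel_bullet ordSK.
by do 3 case: ifP => _ //; rewrite ?ffunE //= ord_predK ordSK.
Qed.

Lemma T4res_relabel w j : T4res (relabel w) j = relabel (T4res w j).
Proof.
apply/ffunP => x; rewrite /T4res !ffunE /=.
have -> : [pick m | relabel w m == (true, ordS (ordS (w j).2))] =
          [pick m | w m == (true, ordS (w j).2)].
  by apply: eq_pick => m /=; rewrite relabel_bullet ordSK.
by do 3 case: ifP => _ //; rewrite ?ffunE.
Qed.

Lemma fwd_relabel w j : fwd (relabel w) j = omap relabel (fwd w j).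
Proof.
rewrite /fwd !ffunE /=; case: (w j).1 => //; case: (w (ordS j)).1 => //=.
by rewrite (inj_eq (@ordS_inj n)); case: ifP => _; rewrite ?T2res_relabel ?swapw_relabel.
Qed.

Lemma bwd_relabel w j : bwd (relabel w) j = omap relabel (bwd w j).
Proof.
rewrite /bwd !ffunE /=; case: (w j).1 => //; case: (w (ord_pred j)).1 => //=.
by rewrite (inj_eq (@ordS_inj n)); case: ifP => _; rewrite ?T4res_relabel ?swapw_relabel.
Qed.

Lemma valid_relabel w : valid (relabel w) = valid w.
Proof.
rewrite /valid; congr (_ && _).
  have e k : [set j | relabel w j == (true, k)] = [set j | w j == (true, ord_pred k)].
    by apply/setP => j; rewrite !inE relabel_bullet.
  apply/forallP/forallP => h k; first by move: (h (ordS k)); rewrite e ordSK.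
  by rewrite e; apply: h.
apply: eq_forallb => j; apply: eq_forallb => j2; rewrite !ffunE /= (inj_eq (@ordS_inj n)).
congr ((_ && _) ==> _); congr (_ && _); congr (_ && _); apply: eq_forallb => x; by rewrite ffunE.
Qed.

End Relabel.

Arguments relabel {n L}.
Arguments unrelabel {n L}.

Section RelabelRates.
Variables (R : realType) (n L : nat) (p q : 'I_n -> R).
Implicit Types (v w : word n L) (pi : word n L -> R).

Lemma rate_relabel v v' :
  rate p q (relabel v) (relabel v') = rate (fun j => p (ordS j)) (fun j => q (ordS j)) v v'.
Proof.
apply: eq_bigr => j _; rewrite fwd_relabel bwd_relabel ffunE.
by case: fwd => [u|]; case: bwd => [u'|] //=; rewrite ?(inj_eq (@relabel_inj n L)).
Qed.

Lemma sum_relabel (F : word n L -> R) :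
  \sum_(v in Omega n L) F (relabel v) = \sum_(w in Omega n L) F w.
Proof.
rewrite [RHS](reindex relabel) /=; last by exists unrelabel => w _; [apply: relabelK|apply: unrelabelK].
by apply: eq_bigl => v; rewrite !inE valid_relabel.
Qed.

Lemma stationary_relabel pi : stationary p q pi ->
  stationary (fun j => p (ordS j)) (fun j => q (ordS j)) (pi \o relabel).
Proof.
case=> h0 hge hs hb; split => //=.
- by move=> w hw; apply: h0; move: hw; rewrite !inE valid_relabel.
- by rewrite (sum_relabel pi).
move=> v' hv'; have hv'' : relabel v' \in Omega n L by move: hv'; rewrite !inE valid_relabel.
under eq_bigr do rewrite -rate_relabel.
rewrite (sum_relabel (fun w => pi w * rate p q w (relabel v'))) hb //; congr (_ * _).
by rewrite -(sum_relabel (rate p q (relabel v'))); apply: eq_bigr => v _; rewrite rate_relabel.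
Qed.

End RelabelRates.

Theorem proposition6p2 (R : realType) (n L : nat)
    (hn : (1 <= n)%N) (hnL : (n < L)%N)
    (p q : 'I_n -> R) (hp : forall k, 0 < p k) (hq : forall k, 0 < q k)
    (pi pi' : word n L -> R) (c1 : 'I_L) (hc1 : nat_of_ord c1 = 0%N) (i : 'I_n) :
  stationary p q pi ->
  stationary (fun j => p (ordS j)) (fun j => q (ordS j)) pi' ->
  density pi' c1 i = density pi c1 (ordS i).
Proof.
move=> hs hs'.
(* The argument never uses [hc1]: the symmetry holds at every column. *)
have e := stationary_unique (fun k => hp _) (fun k => hq _) hn hnL hs' (stationary_relabel hs).
rewrite /density -(sum_relabel (fun w => pi w * (w c1 == (false, ordS i))%:R)).
apply: eq_bigr => v _; rewrite e /= ffunE.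
by rewrite xpair_eqE /= (inj_eq (@ordS_inj n)) -xpair_eqE; case: (v c1).
Qed.
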